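(* Let $(M,d)$ be a compact ultrametric space and $n\in\mathbb{N}$. The optimal codes of size $n$ in $(M,d)$ are exactly the sets consisting of $n$ representatives of distinct parts of $\Pi(\delta)$, where $\delta=\max\{r:|\Pi(r)|\geq n\}$.
   Context: An ultrametric space satisfies $d(x,z)\leq\max(d(x,y),d(y,z))$ for all $x,y,z$. For $r>0$, $\Pi(r)$ denotes the partition of $M$ into open balls $B(x,r)=\{y:d(x,y)<r\}$ (any two such balls are equal or disjoint; in a compact space $\Pi(r)$ is finite). For finite $C\subseteq M$, $\delta(C)$ is the minimum distance between distinct points; an optimal code of size $n$ is an $n$-element subset maximizing $\delta$. *)

From Stdlib Require Import Reals List.
Import ListNotations.
Open Scope R_scope.

Section Ultra.
Context {M : Type} (d : M -> M -> R).

Definition is_metric : Prop :=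
  (forall x y, 0 <= d x y) /\
  (forall x y, d x y = 0 <-> x = y) /\
  (forall x y, d x y = d y x) /\
  (forall x y z, d x z <= d x y + d y z).

Definition is_ultrametric : Prop :=
  forall x y z, d x z <= Rmax (d x y) (d y z).

Definition ball (x : M) (r : R) : M -> Prop := fun y => d x y < r.

Definition is_open (U : M -> Prop) : Prop :=
  forall x, U x -> exists r, 0 < r /\ forall y, ball x r y -> U y.

Definition is_compact : Prop :=
  forall (I : Type) (U : I -> M -> Prop),
    (forall i, is_open (U i)) -> (forall x, exists i, U i x) ->
    exists l : list I, forall x, exists i, In i l /\ U i x.

(* B is a part of Pi(r), i.e. an open ball of radius r *)
Definition is_part (r : R) (B : M -> Prop) : Prop := exists x, B = ball x r.

Definition Pi_card_ge (r : R) (n : nat) : Prop :=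
  exists Bs : list (M -> Prop), length Bs = n /\ NoDup Bs /\ Forall (is_part r) Bs.

Definition is_min_dist (C : list M) (m : R) : Prop :=
  (exists x y, In x C /\ In y C /\ x <> y /\ d x y = m) /\
  (forall x y, In x C -> In y C -> x <> y -> m <= d x y).

Definition is_code (n : nat) (C : list M) : Prop := NoDup C /\ length C = n.

Definition is_optimal_code (n : nat) (C : list M) : Prop :=
  is_code n C /\
  forall C' m m', is_code n C' -> is_min_dist C m -> is_min_dist C' m' -> m' <= m.

Definition is_max_radius (n : nat) (delta : R) : Prop :=
  0 < delta /\ Pi_card_ge delta n /\
  forall r, 0 < r -> Pi_card_ge r n -> r <= delta.

Definition is_transversal_code (n : nat) (delta : R) (C : list M) : Prop :=
  is_code n C /\
  forall x y, In x C -> In y C -> x <> y -> ball x delta <> ball y delta.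

End Ultra.

(* In an ultrametric space every point of a ball is a centre of it, so the balls
   B(x,r) and B(y,r) are distinct exactly when d(x,y) >= r.  Hence |Pi(r)| >= n
   iff some n-point code has minimum distance >= r, and the optimal codes are the
   n-point codes whose minimum distance reaches the largest such r.  That this
   largest r exists is where compactness enters: covering M by finitely many
   balls of radius r0 > 0, the isosceles property shows that every distance
   >= r0 is a distance between two of the finitely many centres. *)

From Stdlib Require Import Reals List.
From Stdlib Require Import Lia Lra Classical FunctionalExtensionality PropExtensionality.
Open Scope R_scope.

Lemma exists_greatest_in_list {A : Type} (le : A -> A -> Prop)
  (le_refl : forall x, le x x) (le_trans : forall x y z, le x y -> le y z -> le x z)
  (le_total : forall x y, le x y \/ le y x) (P : A -> Prop) (l : list A) :
  (exists x, In x l /\ P x) ->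
  exists m, In m l /\ P m /\ forall x, In x l -> P x -> le x m.
Proof.
  induction l as [|a l IH]; intros [x [Hx Px]]; [destruct Hx|].
  destruct (classic (exists y, In y l /\ P y)) as [Hl|Hl].
  - destruct (IH Hl) as [m [Hm [Pm Hmax]]].
    destruct (classic (P a)) as [Pa|nPa].
    + destruct (le_total a m) as [Ham|Hma].
      * exists m; split; [right; exact Hm|split; [exact Pm|]].
        intros y [<-|Hy] Py; auto.
      * exists a; split; [left; reflexivity|split; [exact Pa|]].
        intros y [<-|Hy] Py; eauto.
    + exists m; split; [right; exact Hm|split; [exact Pm|]].
      intros y [<-|Hy] Py; [contradiction|auto].
  - destruct Hx as [<-|Hx]; [|exfalso; eauto].
    exists a; split; [left; reflexivity|split; [exact Px|]].
    intros y [<-|Hy] Py; [auto|exfalso; eauto].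
Qed.

Lemma NoDup_map_neq {A B : Type} (f : A -> B) (l : list A) :
  NoDup (map f l) -> forall x y, In x l -> In y l -> x <> y -> f x <> f y.
Proof.
  induction l as [|a l IH]; simpl; intros Hnd x y Hx Hy Hxy; [destruct Hx|].
  inversion Hnd as [|? ? Hfa Hnd']; subst.
  destruct Hx as [<-|Hx]; destruct Hy as [<-|Hy].
  - contradiction.
  - intros E; apply Hfa; rewrite E; apply in_map; exact Hy.
  - intros E; apply Hfa; rewrite <- E; apply in_map; exact Hx.
  - apply IH; auto.
Qed.

Section Ultrametric.

Context {M : Type} (d : M -> M -> R).
Hypothesis Hmet : is_metric d.
Hypothesis Hultra : is_ultrametric d.

Definition separated (r : R) (C : list M) : Prop :=
  forall x y, In x C -> In y C -> x <> y -> r <= d x y.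

Lemma dist_self (x : M) : d x x = 0.
Proof. apply (proj1 (proj2 Hmet)); reflexivity. Qed.

Lemma dist_pos_iff_neq (x y : M) : 0 < d x y <-> x <> y.
Proof.
  destruct Hmet as [Hpos [Hzero _]]; split.
  - intros H ->; rewrite dist_self in H; lra.
  - intros Hxy; destruct (Hpos x y) as [H|H]; [exact H|].
    exfalso; apply Hxy, Hzero; auto.
Qed.

Lemma ball_center (x : M) (r : R) : 0 < r -> ball d x r x.
Proof. unfold ball; rewrite dist_self; auto. Qed.

Lemma ball_eq_of_dist_lt (x y : M) (r : R) : d x y < r -> ball d x r = ball d y r.
Proof.
  destruct Hmet as [_ [_ [Hsym _]]]; intros Hxy.
  apply functional_extensionality; intro z; apply propositional_extensionality.
  unfold ball; split; intro Hz.
  - pose proof (Hultra y x z); pose proof (Rmax_lub_lt _ _ _ Hxy Hz).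
    rewrite (Hsym y x) in *; lra.
  - pose proof (Hultra x y z); pose proof (Rmax_lub_lt _ _ _ Hxy Hz); lra.
Qed.

Lemma ball_neq_iff (x y : M) (r : R) : 0 < r ->
  ball d x r <> ball d y r <-> r <= d x y.
Proof.
  intros Hr; split.
  - intros Hneq; destruct (Rle_or_lt r (d x y)) as [H|H]; [exact H|].
    exfalso; apply Hneq, ball_eq_of_dist_lt, H.
  - intros H E; pose proof (ball_center y r Hr) as Hy.
    rewrite <- E in Hy; unfold ball in Hy; lra.
Qed.

Lemma dist_isosceles (a b c : M) : d a b < d b c -> d a c = d b c.
Proof.
  destruct Hmet as [_ [_ [Hsym _]]]; intros H.
  pose proof (Hultra a b c); pose proof (Hultra b a c).
  rewrite (Hsym b a) in *; unfold Rmax in *.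
  destruct (Rle_dec (d a b) (d b c)); destruct (Rle_dec (d a b) (d a c)); lra.
Qed.

Lemma Pi_card_ge_iff_separated_code (r : R) (n : nat) : 0 < r ->
  Pi_card_ge d r n <-> exists C, is_code n C /\ separated r C.
Proof.
  intros Hr; split.
  - intros [Bs [Hlen [Hnd Hparts]]].
    destruct (proj1 (Forall_image (fun x => ball d x r) Bs) Hparts) as [C ->].
    rewrite length_map in Hlen.
    exists C; split; [split; [eapply NoDup_map_inv; eauto|exact Hlen]|].
    intros x y Hx Hy Hxy; apply (ball_neq_iff x y r Hr).
    exact (NoDup_map_neq _ C Hnd x y Hx Hy Hxy).
  - intros [C [[Hnd Hlen] Hsep]].
    exists (map (fun x => ball d x r) C); split; [|split].
    + rewrite length_map; exact Hlen.
    + apply NoDup_map_NoDup_ForallPairs; [|exact Hnd].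
      intros x y Hx Hy E; apply NNPP; intros Hxy.
      exact (proj2 (ball_neq_iff x y r Hr) (Hsep x y Hx Hy Hxy) E).
    + apply Forall_image; eauto.
Qed.

Lemma min_dist_exists (n : nat) (C : list M) : (2 <= n)%nat -> is_code n C ->
  exists m, is_min_dist d C m.
Proof.
  intros Hn [Hnd Hlen].
  destruct C as [|a [|b C']]; simpl in Hlen; [lia|lia|].
  assert (Hab : a <> b).
  { apply NoDup_cons_iff in Hnd as [Ha _]; intros ->; apply Ha; left; reflexivity. }
  set (C := a :: b :: C').
  set (D := map (fun p => d (fst p) (snd p)) (list_prod C C)).
  assert (HD : forall x y, In x C -> In y C -> In (d x y) D).
  { intros x y Hx Hy; apply in_map_iff; exists (x, y); split; [reflexivity|].
    apply in_prod_iff; auto. }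
  destruct (exists_greatest_in_list (fun x y => y <= x) Rle_refl
              ltac:(intros; lra) ltac:(intros; lra) (fun g => 0 < g) D)
    as [m [Hm [Hmpos Hmin]]].
  { exists (d a b); split; [apply HD; simpl; auto|apply dist_pos_iff_neq, Hab]. }
  exists m; apply in_map_iff in Hm; destruct Hm as [[x y] [<- Hin]].
  apply in_prod_iff in Hin as [Hx Hy]; split.
  - exists x, y; split; [exact Hx|split; [exact Hy|split; [|reflexivity]]].
    apply dist_pos_iff_neq, Hmpos.
  - intros u v Hu Hv Huv; apply Hmin; [apply HD; auto|apply dist_pos_iff_neq, Huv].
Qed.

Lemma min_dist_pos (C : list M) (m : R) : is_min_dist d C m -> 0 < m.
Proof.
  intros [[x [y [_ [_ [Hxy <-]]]]] _]; apply dist_pos_iff_neq, Hxy.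
Qed.

Lemma min_dist_ge_iff (C : list M) (m r : R) : is_min_dist d C m ->
  r <= m <-> separated r C.
Proof.
  intros [[x [y [Hx [Hy [Hxy Hm]]]]] Hlow]; split.
  - intros Hr u v Hu Hv Huv; specialize (Hlow u v Hu Hv Huv); lra.
  - intros Hsep; rewrite <- Hm; apply Hsep; auto.
Qed.

Lemma Pi_card_ge_iff_min_dist (r : R) (n : nat) : 0 < r -> (2 <= n)%nat ->
  Pi_card_ge d r n <-> exists C m, is_code n C /\ is_min_dist d C m /\ r <= m.
Proof.
  intros Hr Hn; rewrite (Pi_card_ge_iff_separated_code r n Hr); split.
  - intros [C [HC Hsep]].
    destruct (min_dist_exists n C Hn HC) as [m Hm].
    exists C, m; split; [exact HC|split; [exact Hm|]].
    apply (min_dist_ge_iff C m r Hm), Hsep.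
  - intros [C [m [HC [Hm Hrm]]]]; exists C; split; [exact HC|].
    apply (min_dist_ge_iff C m r Hm), Hrm.
Qed.

Lemma Pi_card_ge_min_dist (n : nat) (C : list M) (m : R) : (2 <= n)%nat ->
  is_code n C -> is_min_dist d C m -> Pi_card_ge d m n.
Proof.
  intros Hn HC Hm; apply Pi_card_ge_iff_min_dist; [exact (min_dist_pos C m Hm)|exact Hn|].
  exists C, m; split; [exact HC|split; [exact Hm|apply Rle_refl]].
Qed.

Lemma ball_open (x : M) (r : R) : is_open d (ball d x r).
Proof.
  destruct Hmet as [_ [_ [_ Htri]]]; intros y Hy.
  exists (r - d x y); unfold ball in *; split; [lra|].
  intros z Hz; pose proof (Htri x y z); lra.
Qed.

Lemma large_distances_finite (r0 : R) : is_compact d -> 0 < r0 ->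
  exists F : list R, forall x y, r0 <= d x y -> In (d x y) F.
Proof.
  destruct Hmet as [_ [_ [Hsym _]]]; intros Hcomp Hr0.
  destruct (Hcomp M (fun x => ball d x r0)) as [l Hl].
  { intros x; apply ball_open. }
  { intros x; exists x; apply ball_center, Hr0. }
  exists (map (fun p => d (fst p) (snd p)) (list_prod l l)).
  intros y z Hyz.
  destruct (Hl y) as [u [Hu Hyu]]; destruct (Hl z) as [v [Hv Hzv]].
  unfold ball in Hyu, Hzv.
  assert (Euz : d u z = d y z) by (apply dist_isosceles; lra).
  assert (Evu : d v u = d z u) by (apply dist_isosceles; rewrite (Hsym z u); lra).
  apply in_map_iff; exists (u, v); split; [|apply in_prod_iff; auto].
  simpl; rewrite (Hsym u v), Evu, (Hsym z u); exact Euz.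
Qed.

Lemma max_radius_exists (n : nat) : is_compact d -> (2 <= n)%nat ->
  (exists C : list M, is_code n C) -> exists delta, is_max_radius d n delta.
Proof.
  intros Hcomp Hn [C0 HC0].
  destruct (min_dist_exists n C0 Hn HC0) as [r0 Hr0].
  pose proof (min_dist_pos C0 r0 Hr0) as Hr0pos.
  destruct (large_distances_finite r0 Hcomp Hr0pos) as [F HF].
  assert (HinF : forall C m, is_min_dist d C m -> r0 <= m -> In m F).
  { intros C m [[x [y [_ [_ [_ <-]]]]] _] Hm; apply HF, Hm. }
  destruct (exists_greatest_in_list Rle Rle_refl Rle_trans ltac:(intros; lra)
              (fun f => r0 <= f /\ Pi_card_ge d f n) F)
    as [delta [_ [[Hr0d Hdelta] Hmax]]].
  { exists r0; split; [apply (HinF C0); auto; lra|split; [lra|]].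
    exact (Pi_card_ge_min_dist n C0 r0 Hn HC0 Hr0). }
  exists delta; split; [lra|split; [exact Hdelta|]].
  intros r Hr Hcard; destruct (Rle_or_lt r r0) as [Hle|Hlt]; [lra|].
  destruct (proj1 (Pi_card_ge_iff_min_dist r n Hr Hn) Hcard) as [C [m [HC [Hm Hrm]]]].
  enough (m <= delta) by lra.
  apply Hmax; [apply (HinF C); auto; lra|split; [lra|]].
  exact (Pi_card_ge_min_dist n C m Hn HC Hm).
Qed.

Lemma optimal_code_iff_separated (n : nat) (delta : R) (C : list M) :
  (2 <= n)%nat -> is_max_radius d n delta ->
  is_optimal_code d n C <-> is_code n C /\ separated delta C.
Proof.
  intros Hn [Hdpos [Hdelta Hmax]]; split.
  - intros [HC Hopt]; split; [exact HC|].
    destruct (min_dist_exists n C Hn HC) as [m Hm].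
    destruct (proj1 (Pi_card_ge_iff_min_dist delta n Hdpos Hn) Hdelta)
      as [C' [m' [HC' [Hm' Hdm']]]].
    apply (min_dist_ge_iff C m delta Hm).
    pose proof (Hopt C' m m' HC' Hm Hm'); lra.
  - intros [HC Hsep]; split; [exact HC|]; intros C' m m' HC' Hm Hm'.
    pose proof (proj2 (min_dist_ge_iff C m delta Hm) Hsep).
    enough (m' <= delta) by lra.
    apply Hmax; [exact (min_dist_pos C' m' Hm')|].
    exact (Pi_card_ge_min_dist n C' m' Hn HC' Hm').
Qed.

Lemma transversal_code_iff_separated (n : nat) (delta : R) (C : list M) : 0 < delta ->
  is_transversal_code d n delta C <-> is_code n C /\ separated delta C.
Proof.
  intros Hdpos; split; intros [HC Hsep]; split; auto;
    intros x y Hx Hy Hxy; apply (ball_neq_iff x y delta Hdpos); auto.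
Qed.

End Ultrametric.

Theorem lemma4p17 (M : Type) (d : M -> M -> R) (n : nat)
  (Hmet : is_metric d) (Hultra : is_ultrametric d) (Hcomp : is_compact d)
  (Hn : (2 <= n)%nat)
  (HM : exists C : list M, NoDup C /\ length C = n) :
  exists delta : R, is_max_radius d n delta /\
    forall C : list M, is_optimal_code d n C <-> is_transversal_code d n delta C.
Proof.
  destruct (max_radius_exists d Hmet Hultra n Hcomp Hn HM) as [delta Hdelta].
  exists delta; split; [exact Hdelta|intros C].
  rewrite (optimal_code_iff_separated d Hmet Hultra n delta C Hn Hdelta).
  rewrite (transversal_code_iff_separated d Hmet Hultra n delta C (proj1 Hdelta)).
  reflexivity.
Qed.
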